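(* Assume $n\geq 10^6$, let $t$ be a node of maximum popularity (so $\mu_t\ge\mu_k$ for all nodes $k$), and assume $\xi_t\geq 8200\ln n$. Let $\ell\in\{0,1,2\}$, and let $h$ be an integer and $k$ a node such that $h\in Z_t$ and $h-2\in Z_k$. Then $$\Pr[d_k(\mathbf{x})=h-\ell]\;\leq\;264\,e\sqrt{\frac{\ln n}{\xi_t}}\cdot\Pr[d_k(\mathbf{x})>h].$$
   Context: Setting: a priori popularity model on $n+1$ agents, where each directed edge $(i,j)$, $i\ne j$, is present independently with probability $p_j$, so the in-degree $d_k(\mathbf{x})\sim\mathrm{Bin}(n,p_k)$. Let $\mu_k=p_kn$ and $\xi_k=\min\{\mu_k,n-\mu_k\}$. The comfort zone of node $k$ is $Z_k=\{L_k,\dots,U_k\}$, where $L_k$ is the highest integer $c$ with $\Pr[d_k(\mathbf{x})<c]\leq n^{-5.33}$ (or $0$ if none exists) and $U_k$ is the lowest integer $c$ with $\Pr[d_k(\mathbf{x})>c]\leq n^{-5.33}$ (or $n$ if none exists). *)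

From HB Require Import structures.
From mathcomp Require Import all_boot all_order all_algebra.
From mathcomp Require Import all_classical all_reals all_analysis.
Set Implicit Arguments. Unset Strict Implicit. Unset Printing Implicit Defensive.
Import Order.TTheory GRing.Theory Num.Theory.
Local Open Scope ring_scope.

Section Popularity.
Variable R : realType.

Definition binom_pmf (n : nat) (p : R) (j : nat) : R :=
  'C(n, j)%:R * p ^+ j * (1 - p) ^+ (n - j).

Definition PrBin (n : nat) (p : R) (P : int -> bool) : R :=
  \sum_(j < n.+1 | P (j%:Z)) binom_pmf n p j.

(* In the a priori popularity model on n+1 agents, node k has in-degree
   d_k ~ Bin(n, p k). *)
Definition mu (n : nat) (p : 'I_n.+1 -> R) (k : 'I_n.+1) : R := p k * n%:R.
Definition xi (n : nat) (p : 'I_n.+1 -> R) (k : 'I_n.+1) : R :=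
  Num.min (mu p k) (n%:R - mu p k).

Definition thr (n : nat) : R := powR (n%:R) (- (533%:R / 100%:R)).

Definition L_ok (n : nat) (p : R) (c : int) : Prop :=
  PrBin n p (fun j => j < c) <= thr n.
Definition U_ok (n : nat) (p : R) (c : int) : Prop :=
  PrBin n p (fun j => j > c) <= thr n.

Definition is_L (n : nat) (p : R) (L : int) : Prop :=
  (L_ok n p L /\ forall c, L < c -> ~ L_ok n p c)
  \/ ((~ exists c, L_ok n p c) /\ L = 0).
Definition is_U (n : nat) (p : R) (U : int) : Prop :=
  (U_ok n p U /\ forall c, c < U -> ~ U_ok n p c)
  \/ ((~ exists c, U_ok n p c) /\ U = n%:Z).

Definition in_zone (n : nat) (p : 'I_n.+1 -> R) (k : 'I_n.+1) (h : int) : Prop :=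
  exists L U, is_L n (p k) L /\ is_U n (p k) U /\ L <= h <= U.

End Popularity.

From HB Require Import structures.
From mathcomp Require Import all_boot all_order all_algebra.
From mathcomp Require Import all_classical all_reals all_analysis.
From mathcomp Require Import ring lra zify.
Import Order.TTheory GRing.Theory Num.Theory.
Local Open Scope ring_scope.
Set Implicit Arguments. Unset Strict Implicit. Unset Printing Implicit Defensive.

(* Write r = sqrt(ln n / xi_t).  A Chernoff bound with lambda = -11/5 r shows
   that h in Z_t forces h >= mu_t - 5 xi_t r, and one with lambda = 11/5 r
   that h - 2 in Z_k forces h <= mu_k + 11/2 xi_t r + 2.  As mu_k <= mu_t, the
   node k then has variance mu_k (1 - p_k) >= 11/25 xi_t.  Near the mean the
   ratio Pr[d = j+1] / Pr[d = j] is at least 1 - delta with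
   delta = O(xi_t r / variance), so each of the m ~ 1/(330 r) values
   h+1, ..., h+m carries at least half the mass Pr[d_k = h - l]; summing,
   Pr[d_k > h] >= Pr[d_k = h - l] / (660 r), and 660 <= 264 e. *)

Lemma expR_le_quad (R : realType) (x : R) : x <= 1/11 -> expR x <= 1 + x + 11/10 * x ^+ 2.
Proof.
move=> hx.
have hNx : 1 - x <= expR (- x) by have := expR_ge1Dx (- x); lra.
have hxNx : expR x * expR (- x) = 1 by rewrite -expRD subrr expR0.
have hx0 := expR_gt0 x.
have hB : 1 <= (1 - x) * (1 + x + 11/10 * x ^+ 2).
  have : 0 <= x ^+ 2 * (1/11 - x) by rewrite mulr_ge0 ?sqr_ge0 //; lra.
  nra.
have : 0 <= 1 + x + 11/10 * x ^+ 2 by nra.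
nra.
Qed.

Lemma expR1_ge (R : realType) : 5/2 <= expR 1 :> R.
Proof.
have -> : (1 : R) = 6%:R * (1/6) by rewrite mul1r mulfV // pnatr_eq0.
rewrite expRM_natl.
have h0 : (0 : R) <= 1 + 1/6 by lra.
apply: le_trans (lerXn2r 6 h0 (expR_ge0 _) (expR_ge1Dx _)).
rewrite !exprS expr0; lra.
Qed.

Lemma expR1_le4 (R : realType) : expR 1 <= 4 :> R.
Proof.
have -> : (1 : R) = 2%:R * (1/2) by rewrite mul1r mulfV // pnatr_eq0.
rewrite expRM_natl.
have hNh := expR_ge1Dx (- (1/2) : R).
have hhNh : expR (1/2 : R) * expR (- (1/2)) = 1 by rewrite -expRD subrr expR0.
have hh0 := expR_gt0 (1/2 : R).
have hh2 : expR (1/2 : R) <= 2 by nra.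
have := lerXn2r 2 (ltW hh0) (ler0n R 2) hh2.
rewrite !expr2; lra.
Qed.

Lemma ln_ge1 (R : realType) (x : R) : 4 <= x -> 1 <= ln x.
Proof.
move=> hx; rewrite -[leLHS](expRK 1) ler_ln ?posrE ?expR_gt0 //; last by lra.
exact: le_trans (expR1_le4 R) hx.
Qed.

Lemma exists_nat_mul_between (R : archiRealFieldType) (s : R) : 0 < s ->
  exists m : nat, 1 <= s * m%:R <= 1 + s.
Proof.
move=> s0; set x := s^-1.
have sx : s * x = 1 by rewrite mulfV ?gt_eqF.
have x0 : 0 <= x by rewrite invr_ge0 ltW.
exists (Num.truncn x).+1; rewrite -addn1 natrD.
have := truncnS_gt x; rewrite -addn1 natrD => hgt.
have hle : (Num.truncn x)%:R <= x by rewrite truncn_le.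
apply/andP; split.
- by rewrite -[leLHS]sx ler_wpM2l // ltW.
- by rewrite mulrDr mulr1 lerD2r -[leRHS]sx ler_wpM2l // ltW.
Qed.

Lemma bernoulli_mgf_le (R : realType) (q lam : R) : 0 <= q <= 1 -> lam <= 1/11 ->
  1 - q + q * expR lam <= expR (q * (lam + 11/10 * lam ^+ 2)).
Proof.
move=> /andP[q0 q1] hlam; apply: le_trans (expR_ge1Dx _).
have := expR_le_quad hlam; nra.
Qed.

Section Binomial.
Variables (R : realType) (n : nat) (q : R).
Hypothesis hq : 0 <= q <= 1.
Implicit Types (P : int -> bool) (lam c v E : R).

Lemma binom_pmf_ge0 j : 0 <= binom_pmf n q j.
Proof. by case/andP: hq => q0 q1; rewrite !mulr_ge0 // exprn_ge0 // subr_ge0. Qed.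

Lemma PrBin_ge0 P : 0 <= PrBin n q P.
Proof. by rewrite sumr_ge0 // => j _; apply: binom_pmf_ge0. Qed.

Lemma PrBin_eq0 P : (forall j : nat, (j <= n)%N -> ~~ P j%:Z) -> PrBin n q P = 0.
Proof. by move=> hP; rewrite /PrBin big1 // => j; have := hP j (ltn_ord j) => /negbTE ->. Qed.

Lemma PrBin_pred1 x : PrBin n q (fun j => j == x%:Z) = binom_pmf n q x.
Proof.
have [xn | nx] := leqP x n; last first.
  rewrite PrBin_eq0 => [|j jn]; last by rewrite eqz_nat; apply: contraTneq jn => ->; rewrite -ltnNge.
  by rewrite /binom_pmf bin_small // !mul0r.
rewrite /PrBin (big_pred1 (inord x : 'I_n.+1)) ?inordK // => j /=.
by rewrite eqz_nat -val_eqE /= inordK.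
Qed.

Lemma binom_pmf_succ j : (j < n)%N ->
  binom_pmf n q j.+1 * (j.+1%:R * (1 - q)) = binom_pmf n q j * ((n - j)%:R * q).
Proof.
move=> jn; rewrite /binom_pmf.
have hC : 'C(n, j.+1)%:R * j.+1%:R = 'C(n, j)%:R * (n - j)%:R :> R.
  by rewrite -!natrM mulnC mul_bin_left mulnC.
rewrite -(subnSK jn) !exprS; set k := (n - j.+1)%N.
transitivity ('C(n, j.+1)%:R * j.+1%:R * (q * q ^+ j) * (1 - q) ^+ k * (1 - q)); first by ring.
rewrite hC /k (subnSK jn); ring.
Qed.

Lemma binom_mgf lam :
  \sum_(j < n.+1) binom_pmf n q j * expR (lam * j%:R) = (1 - q + q * expR lam) ^+ n.
Proof.
rewrite exprDn; apply: eq_bigr => i _.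
rewrite /binom_pmf expRM_natr exprMn -mulr_natl; ring.
Qed.

Lemma PrBin_le_mgf P lam c :
  (forall j : nat, (j <= n)%N -> P j%:Z -> 0 <= lam * (j%:R - c)) ->
  PrBin n q P <= expR (- (lam * c)) * (1 - q + q * expR lam) ^+ n.
Proof.
move=> hP; rewrite -binom_mgf mulr_sumr /PrBin big_mkcond /=.
apply: ler_sum => j _; case: ifP => Pj; last first.
  by rewrite mulr_ge0 ?expR_ge0 // mulr_ge0 ?expR_ge0 // binom_pmf_ge0.
rewrite mulrCA -expRD ler_peMr ?binom_pmf_ge0 //.
have := hP j (ltn_ord j) Pj; have := expR_ge1Dx (- (lam * c) + lam * j%:R); lra.
Qed.

Lemma PrBin_le_expR P lam c E :
  (forall j : nat, (j <= n)%N -> P j%:Z -> 0 <= lam * (j%:R - c)) ->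
  1 - q + q * expR lam <= expR E -> PrBin n q P <= expR (n%:R * E - lam * c).
Proof.
move=> hP hE; apply: le_trans (PrBin_le_mgf hP) _.
have b0 : 0 <= 1 - q + q * expR lam by case/andP: hq; have := expR_gt0 lam; nra.
rewrite expRD expRM_natl mulrC ler_wpM2r ?expR_ge0 //.
by rewrite lerXn2r ?nnegrE ?expR_ge0.
Qed.

Lemma PrBin_chernoff P lam c v : `|lam| <= 1/11 -> (v = n%:R * q \/ v = n%:R - n%:R * q) ->
  (forall j : nat, (j <= n)%N -> P j%:Z -> 0 <= lam * (j%:R - c)) ->
  PrBin n q P <= expR (lam * (n%:R * q - c) + 11/10 * v * lam ^+ 2).
Proof.
rewrite ler_norml => /andP[hl1 hl2] [->|->] hP.
- apply: le_trans (PrBin_le_expR hP (bernoulli_mgf_le hq _)) _; first lra.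
  by rewrite ler_expR; lra.
- have hq' : 0 <= 1 - q <= 1 by case/andP: hq => ? ?; apply/andP; lra.
  have hE : 1 - q + q * expR lam <= expR (lam + (1 - q) * (- lam + 11/10 * (- lam) ^+ 2)).
    rewrite expRD.
    have -> : 1 - q + q * expR lam = expR lam * (1 - (1 - q) + (1 - q) * expR (- lam)).
      by rewrite mulrDr mulrCA -expRD subrr expR0; ring.
    by rewrite ler_wpM2l ?expR_ge0 // bernoulli_mgf_le //; lra.
  apply: le_trans (PrBin_le_expR hP hE) _.
  by rewrite ler_expR; lra.
Qed.

Lemma binom_pmf_succ_ge j delta beta : 0 < q < 1 -> 0 <= delta ->
  beta <= delta * (n%:R * q * (1 - q)) -> (j < n)%N -> j.+1%:R <= n%:R * q + beta ->
  (1 - delta) * binom_pmf n q j <= binom_pmf n q j.+1.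
Proof.
move=> /andP[q0 q1] d0 hb jn hJ.
have hr := binom_pmf_succ jn; set J : R := j.+1%:R in hr hJ.
have J0 : 0 < J by rewrite ltr0n.
have hnj : (n - j)%:R = n%:R - J + 1 :> R by rewrite natrB ?(ltnW jn) // /J -addn1 natrD; ring.
have key : (1 - delta) * (J * (1 - q)) <= (n - j)%:R * q.
  rewrite hnj; have [hle|hgt] := leP J (n%:R * q).
  - have : 0 <= delta * J * (1 - q) by rewrite !mulr_ge0 //; lra.
    nra.
  - have : delta * (n%:R * q * (1 - q)) <= delta * (J * (1 - q)).
      by apply: ler_wpM2l => //; apply: ler_wpM2r; lra.
    nra.
have pos : 0 < J * (1 - q) by rewrite mulr_gt0 //; lra.
by rewrite -(ler_pM2r pos) hr -mulrA mulrCA ler_wpM2l ?binom_pmf_ge0.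
Qed.

Lemma binom_pmf_shift_ge j0 N delta beta : 0 < q < 1 -> 0 <= delta -> delta <= 1 ->
  beta <= delta * (n%:R * q * (1 - q)) -> (j0 + N <= n)%N -> (j0 + N)%:R <= n%:R * q + beta ->
  forall i, (i <= N)%N -> (1 - i%:R * delta) * binom_pmf n q j0 <= binom_pmf n q (j0 + i).
Proof.
move=> hq01 d0 d1 hb hN hJ; elim => [|i IH] hi; first by rewrite mul0r subr0 mul1r addn0.
have hstep : (1 - delta) * binom_pmf n q (j0 + i) <= binom_pmf n q (j0 + i).+1.
  apply: binom_pmf_succ_ge hb _ _ => //; first lia.
  by apply: le_trans hJ; rewrite ler_nat; lia.
rewrite addnS; apply: le_trans hstep.
have hd1 : 1 - i.+1%:R * delta <= (1 - delta) * (1 - i%:R * delta).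
  rewrite -addn1 natrD; have : 0 <= i%:R * delta * delta by rewrite !mulr_ge0.
  nra.
have hd : 0 <= 1 - delta by lra.
apply: le_trans (ler_wpM2l hd (IH (ltnW hi))); rewrite [leRHS]mulrA.
by apply: ler_wpM2r hd1; apply: binom_pmf_ge0.
Qed.

Lemma PrBin_gt_ge_window H m g : (H + m <= n)%N ->
  (forall i, (1 <= i <= m)%N -> g <= binom_pmf n q (H + i)) ->
  m%:R * g <= PrBin n q (fun j => j > H%:Z).
Proof.
move=> hm hg.
rewrite /PrBin -(big_mkord (fun j : nat => H%:Z < j%:Z) (binom_pmf n q)).
rewrite (@big_cat_nat _ _ _ H.+1) //=; last lia.
rewrite [X in _ <= _ + X](@big_cat_nat _ _ _ (H.+1 + m)) //=; last lia.
have hlo : 0 <= \sum_(0 <= i < H.+1 | H%:Z < i%:Z) binom_pmf n q i.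
  by apply: sumr_ge0 => i _; apply: binom_pmf_ge0.
have hhi : 0 <= \sum_(H.+1 + m <= i < n.+1 | H%:Z < i%:Z) binom_pmf n q i.
  by apply: sumr_ge0 => i _; apply: binom_pmf_ge0.
suff : m%:R * g <= \sum_(H.+1 <= i < H.+1 + m | H%:Z < i%:Z) binom_pmf n q i by lra.
rewrite big_mkcond /=.
have -> : m%:R * g = \sum_(H.+1 <= i < H.+1 + m) g.
  by rewrite sumr_const_nat mulr_natl; congr (_ *+ _); lia.
apply: ler_sum_nat => i /andP[hi1 hi2].
rewrite ltz_nat hi1 (_ : i = H + (i - H))%N; first by apply: hg; lia.
lia.
Qed.

End Binomial.

Section ComfortZone.
Variables (R : realType) (n : nat) (q : R).

Lemma is_L_lower_tail L h : is_L n q L -> L <= h -> thr R n < PrBin n q (fun j => j < h + 1).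
Proof.
case=> [[_ hmax]|[hnone _]] hLh; first by rewrite ltNge; apply/negP/hmax; lia.
by exfalso; apply: hnone; exists 0; rewrite /L_ok PrBin_eq0 ?powR_ge0.
Qed.

Lemma is_U_upper_tail U h : is_U n q U -> h <= U -> thr R n < PrBin n q (fun j => j > h - 1).
Proof.
case=> [[_ hmin]|[hnone _]] hhU; first by rewrite ltNge; apply/negP/hmin; lia.
by exfalso; apply: hnone; exists n%:Z; rewrite /U_ok PrBin_eq0 ?powR_ge0 // => j jn; lia.
Qed.

Lemma thr_expR : (0 < n)%N -> thr R n = expR (- (533 / 100) * ln n%:R).
Proof. by move=> n0; rewrite /thr /powR pnatr_eq0 gtn_eqF. Qed.

End ComfortZone.

(* [lra] does not use section hypotheses, hence the local copies such as
   [have r0 := hr0] in the proofs of this section. *)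
Section PopularityComparison.
Variables (R : realType) (n : nat) (qt qk Lam xi0 r : R).
Hypotheses (hqt : 0 <= qt <= 1) (hqk : 0 <= qk <= 1) (hmu : n%:R * qk <= n%:R * qt).
Hypothesis hxi : xi0 = Num.min (n%:R * qt) (n%:R - n%:R * qt).
Hypotheses (hLam : 1 <= Lam) (hxi_big : 8200 * Lam <= xi0).
Hypotheses (hr0 : 0 < r) (hxr : xi0 * r ^+ 2 = Lam).

Lemma xi_le_mean : xi0 <= n%:R * qt /\ xi0 <= n%:R - n%:R * qt.
Proof. by apply/andP; rewrite -le_min -hxi. Qed.

Lemma xi_cases : xi0 = n%:R * qt \/ xi0 = n%:R - n%:R * qt.
Proof. by rewrite hxi; case: leP => _; [left | right]. Qed.

Lemma xi_ge : 1000 <= xi0.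
Proof. by move: hLam hxi_big; lra. Qed.

Lemma r_le : r <= 1/90.
Proof.
have xi0_gt0 : 0 < xi0 by move: hLam hxi_big; lra.
have : 8200 * r ^+ 2 <= 1 by rewrite -(ler_pM2l xi0_gt0) mulr1 mulrCA hxr.
rewrite expr2 => hr2; rewrite leNgt; apply/negP => hr.
have : 1/90 * (1/90) < r * r by apply: ltr_pM => //; lra.
lra.
Qed.

Lemma zone_above_mean (H : nat) :
  expR (- (533 / 100) * Lam) < PrBin n qt (fun j => j < H%:Z + 1) ->
  n%:R * qt - 5 * xi0 * r <= H%:R.
Proof.
move=> hZ; rewrite leNgt; apply/negP => hlt.
have r0 := hr0; have Lam1 := hLam; have r_small := r_le.
have hlam : `|- (11/5) * r| <= 1/11 by rewrite ler_norml; lra.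
have hP : forall j : nat, (j <= n)%N -> j%:Z < H%:Z + 1 -> 0 <= - (11/5) * r * (j%:R - H%:R).
  move=> j _; rewrite ltzD1 lez_nat -(ler_nat R) => hjH.
  by apply: mulr_le0; lra.
have hgap : 5 * Lam <= (n%:R * qt - H%:R) * r.
  by rewrite -hxr expr2 !mulrA; apply: ler_wpM2r; lra.
have hexp : - (11/5) * r * (n%:R * qt - H%:R) + 11/10 * xi0 * (- (11/5) * r) ^+ 2
    <= - (533 / 100) * Lam.
  have -> : - (11/5) * r * (n%:R * qt - H%:R) + 11/10 * xi0 * (- (11/5) * r) ^+ 2
      = - (11/5) * ((n%:R * qt - H%:R) * r) + 11/10 * (121/25) * Lam.
    by rewrite -hxr; field.
  lra.
have hT : PrBin n qt (fun j => j < H%:Z + 1) <= expR (- (533 / 100) * Lam).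
  by apply: le_trans (PrBin_chernoff hqt hlam xi_cases hP) _; rewrite ler_expR.
by have := lt_le_trans hZ hT; rewrite ltxx.
Qed.

Lemma zone_below_mean (H : nat) : n%:R * qt - 5 * xi0 * r <= H%:R ->
  expR (- (533 / 100) * Lam) < PrBin n qk (fun j => j > H%:Z - 2 - 1) ->
  H%:R - 2 - n%:R * qk <= 11/2 * xi0 * r.
Proof.
move=> hH hZ; rewrite leNgt; apply/negP => hlt.
have r0 := hr0; have Lam1 := hLam; have r_small := r_le.
have hlam : `|11/5 * r| <= 1/11 by rewrite ler_norml; lra.
have hP : forall j : nat, (j <= n)%N -> H%:Z - 2 - 1 < j%:Z ->
    0 <= 11/5 * r * (j%:R - (H%:R - 2)).
  move=> j _ hj; have : (H <= j + 2)%N by clear -hj; lia.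
  by rewrite -(ler_nat R) natrD => hjH; apply: mulr_ge0; lra.
have [v [hv hvb]] : exists v, (v = n%:R * qk \/ v = n%:R - n%:R * qk) /\
    v <= xi0 + (H%:R - 2 - n%:R * qk) + 2 + 5 * xi0 * r.
  have [xi_le_t _] := xi_le_mean; have mu_le := hmu.
  have : 0 <= xi0 * r by rewrite mulr_ge0 ?ltW //; have := xi_ge; lra.
  case: xi_cases => e.
  - by exists (n%:R * qk); split; [left | lra].
  - by exists (n%:R - n%:R * qk); split; [right | lra].
set a := H%:R - 2 - n%:R * qk in hlt hvb *.
have hgap : 11/2 * Lam <= a * r by rewrite -hxr expr2 !mulrA; apply: ler_wpM2r; lra.
have hv2 : v * r ^+ 2 <= Lam + a * r * r + 2 * r ^+ 2 + 5 * Lam * r.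
  have -> : Lam + a * r * r + 2 * r ^+ 2 + 5 * Lam * r
      = (xi0 + a + 2 + 5 * xi0 * r) * r ^+ 2 by rewrite -hxr expr2; ring.
  by apply: ler_wpM2r; rewrite ?sqr_ge0.
have har : a * r * r <= a * r * (1/90) by apply: ler_wpM2l => //; lra.
have hLr : Lam * r <= Lam * (1/90) by apply: ler_wpM2l => //; lra.
have hr2 : 1000 * r ^+ 2 <= Lam by rewrite -hxr ler_wpM2r ?sqr_ge0 ?xi_ge.
have hexp : 11/5 * r * (n%:R * qk - (H%:R - 2)) + 11/10 * v * (11/5 * r) ^+ 2
    <= - (533 / 100) * Lam.
  have -> : 11/5 * r * (n%:R * qk - (H%:R - 2)) + 11/10 * v * (11/5 * r) ^+ 2
      = - (11/5) * (a * r) + 11/10 * (121/25) * (v * r ^+ 2) by rewrite /a; field.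
  lra.
have hT : PrBin n qk (fun j => j > H%:Z - 2 - 1) <= expR (- (533 / 100) * Lam).
  by apply: le_trans (PrBin_chernoff hqk hlam hv hP) _; rewrite ler_expR.
by have := lt_le_trans hZ hT; rewrite ltxx.
Qed.

Lemma binom_var_ge : n%:R * qt - 21/2 * xi0 * r - 2 <= n%:R * qk ->
  0 < qk < 1 /\ 11/25 * xi0 <= n%:R * qk * (1 - qk).
Proof.
move=> hmean; have [xi_le_t xi_le_nt] := xi_le_mean; have mu_le := hmu.
have xi_big := xi_ge; have hxr_le : xi0 * r <= xi0 * (1/90) by rewrite ler_wpM2l ?r_le; lra.
case/andP: hqk => qk0 qk1.
have qk_gt0 : 0 < qk by rewrite lt_def qk0 andbT; apply/eqP => e; move: hmean; rewrite e; lra.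
have qk_lt1 : qk < 1 by rewrite lt_def qk1 andbT; apply/eqP => e; move: mu_le; rewrite -e; lra.
rewrite qk_gt0 qk_lt1; split=> //; case: (lerP qk (1/2)) => hhalf.
- have : n%:R * qk * (1/2) <= n%:R * qk * (1 - qk) by apply: ler_wpM2l; lra.
  lra.
- have : (n%:R - n%:R * qk) * (1/2) <= (n%:R - n%:R * qk) * qk by apply: ler_wpM2l; lra.
  have -> : n%:R * qk * (1 - qk) = (n%:R - n%:R * qk) * qk by ring.
  lra.
Qed.

Section Window.
Variables (H m : nat).
Hypothesis hH_lo : n%:R * qt - 5 * xi0 * r <= H%:R.
Hypothesis hH_hi : H%:R - 2 - n%:R * qk <= 11/2 * xi0 * r.
Hypothesis hm_hi : 330 * r * m%:R <= 1 + 330 * r.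

Lemma window_le_n : (H + m <= n)%N.
Proof.
have r0 := hr0; have r_small := r_le; have xi_big := xi_ge.
have [_ xi_le_nt] := xi_le_mean; have mu_le := hmu; have hH := hH_hi; have hm := hm_hi.
have hxr_le : xi0 * r <= xi0 * (1/90) by apply: ler_wpM2l; lra.
have hm_xr : m%:R <= (xi0 * r) * (r * m%:R).
  have -> : (xi0 * r) * (r * m%:R) = xi0 * r ^+ 2 * m%:R by ring.
  by rewrite hxr ler_peMl.
have : (xi0 * r) * (r * m%:R) <= (xi0 * r) * (1/330 + 1/90).
  by apply: ler_wpM2l; [rewrite mulr_ge0 //; lra | lra].
by rewrite -(ler_nat R) natrD; lra.
Qed.

Lemma window_width_le : (m%:R + 2) * (11/2 * xi0 * r + m%:R + 2) <= 11/50 * xi0.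
Proof.
have r0 := hr0; have r_small := r_le; have xi_big := xi_ge; have hm := hm_hi.
have hru : r * (m%:R + 2) <= 1/330 + 1/30 by lra.
have ru0 : 0 <= r * (m%:R + 2) by rewrite mulr_ge0 //; lra.
have h1 : xi0 * (r * (m%:R + 2)) <= xi0 * (1/330 + 1/30) by apply: ler_wpM2l => //; lra.
have h2 : (m%:R + 2) ^+ 2 <= xi0 * (r * (m%:R + 2)) ^+ 2.
  by rewrite exprMn mulrA hxr ler_peMl ?sqr_ge0.
have h3 : (r * (m%:R + 2)) ^+ 2 <= (1/330 + 1/30) * (1/330 + 1/30) by rewrite expr2 ler_pM.
have h4 : xi0 * (r * (m%:R + 2)) ^+ 2 <= xi0 * ((1/330 + 1/30) * (1/330 + 1/30)).
  by rewrite ler_wpM2l //; lra.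
have -> : (m%:R + 2) * (11/2 * xi0 * r + m%:R + 2)
    = 11/2 * (xi0 * (r * (m%:R + 2))) + (m%:R + 2) ^+ 2 by ring.
lra.
Qed.

Lemma window_pmf_ge (l i : nat) : (l <= 2)%N -> (l <= H)%N -> (1 <= i <= m)%N ->
  binom_pmf n qk (H - l) / 2 <= binom_pmf n qk (H + i).
Proof.
move=> hl2 hlH /andP[hi1 him].
have [qk01 hD] : 0 < qk < 1 /\ 11/25 * xi0 <= n%:R * qk * (1 - qk).
  by apply: binom_var_ge; move: hH_lo hH_hi; lra.
set D := n%:R * qk * (1 - qk) in hD *.
set beta := 11/2 * xi0 * r + m%:R + 2.
have r0 := hr0; have xi_big := xi_ge; have D0 : 0 < D by lra.
have beta0 : 0 <= beta by rewrite /beta !addr_ge0 // !mulr_ge0 //; lra.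
have hb : beta <= beta / D * D by rewrite divfK ?gt_eqF.
have hwidth : (m%:R + 2) * (beta / D) <= 1/2.
  by rewrite mulrA ler_pdivrMr //; have := window_width_le; rewrite -/beta; lra.
have hd0 : 0 <= beta / D by rewrite divr_ge0 // ltW.
have hd1 : beta / D <= 1.
  have : 0 <= m%:R * (beta / D) by rewrite mulr_ge0.
  by move: hwidth; rewrite mulrDl; lra.
have hN : (H - l + (l + m) <= n)%N by rewrite addnA subnK ?window_le_n.
have hJ : (H - l + (l + m))%:R <= n%:R * qk + beta.
  by rewrite addnA subnK // natrD /beta; move: hH_hi; lra.
have hlim : (l + i <= l + m)%N by rewrite leq_add2l.
have := binom_pmf_shift_ge hqk qk01 hd0 hd1 hb hN hJ hlim.
rewrite addnA subnK // => hshift.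
have hli : (l + i)%:R * (beta / D) <= 1/2.
  by apply: le_trans hwidth; rewrite ler_wpM2r // -(natrD R m 2) ler_nat addnC leq_add.
have hf0 := binom_pmf_ge0 n hqk (H - l).
have : binom_pmf n qk (H - l) * (1/2)
    <= binom_pmf n qk (H - l) * (1 - (l + i)%:R * (beta / D)) by rewrite ler_wpM2l //; lra.
by move: hshift; rewrite mulrC; lra.
Qed.

End Window.

Lemma binom_pmf_le_upper_tail (H l : nat) : (l <= 2)%N -> (l <= H)%N ->
  n%:R * qt - 5 * xi0 * r <= H%:R -> H%:R - 2 - n%:R * qk <= 11/2 * xi0 * r ->
  binom_pmf n qk (H - l) <= 264 * expR 1 * r * PrBin n qk (fun j => j > H%:Z).
Proof.
move=> hl2 hlH hH_lo hH_hi; have r0 := hr0.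
have [m /andP[hm_lo hm_hi]] : exists m : nat, 1 <= 330 * r * m%:R <= 1 + 330 * r.
  by apply: exists_nat_mul_between; rewrite mulr_gt0 ?ltr0n.
have hwindow : m%:R * (binom_pmf n qk (H - l) / 2) <= PrBin n qk (fun j => j > H%:Z).
  apply: (PrBin_gt_ge_window hqk (window_le_n hH_hi hm_hi)) => i hi.
  exact: (@window_pmf_ge H m hH_lo hH_hi hm_hi l i hl2 hlH hi).
have hrm : 1 <= 132 * expR 1 * r * m%:R.
  have rm0 : 0 <= r * m%:R by rewrite mulr_ge0 // ltW.
  have : 330 * (r * m%:R) <= 132 * expR 1 * (r * m%:R).
    by apply: ler_wpM2r => //; have := expR1_ge R; lra.
  by rewrite !mulrA in hm_lo *; lra.
have hf0 := binom_pmf_ge0 n hqk (H - l).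
have hc0 : 0 <= 264 * expR 1 * r by rewrite !mulr_ge0 ?ler0n ?expR_ge0 ?ltW.
apply: le_trans (ler_peMl hf0 hrm) _.
have -> : 132 * expR 1 * r * m%:R * binom_pmf n qk (H - l)
    = 264 * expR 1 * r * (m%:R * (binom_pmf n qk (H - l) / 2)) by field.
by apply: ler_wpM2l.
Qed.

End PopularityComparison.

Theorem mainTheorem9 (R : realType) (n : nat) (p : 'I_n.+1 -> R)
  (hp : forall k, 0 <= p k <= 1)
  (hn : (10%:R ^+ 6 : R) <= n%:R)
  (t : 'I_n.+1) (ht : forall k, mu p k <= mu p t)
  (hxi : 8200%:R * ln (n%:R : R) <= xi p t)
  (l : nat) (hl : (l <= 2)%N) (h : int) (k : 'I_n.+1)
  (hzt : in_zone p t h) (hzk : in_zone p k (h - 2)) :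
  PrBin n (p k) (fun j => j == h - l%:Z)
    <= 264%:R * expR 1 * Num.sqrt (ln (n%:R : R) / xi p t)
       * PrBin n (p k) (fun j => j > h).
Proof.
have hn4 : 4 <= n%:R :> R.
  have : 1 <= 10%:R ^+ 5 :> R by rewrite exprn_ege1 // ler1n.
  by move: hn; rewrite exprS; lra.
have hn0 : (0 < n)%N by rewrite -(ltr_nat R); lra.
have hrhs0 : 0 <= 264%:R * expR 1 * Num.sqrt (ln (n%:R : R) / xi p t)
    * PrBin n (p k) (fun j => j > h) by rewrite !mulr_ge0 ?ler0n ?expR_ge0 ?sqrtr_ge0 ?PrBin_ge0.
case: h hzt hzk hrhs0 => H hzt hzk hrhs0; last by rewrite PrBin_eq0 // => j _; lia.
have [hlH | hHl] := leqP l H; last by rewrite PrBin_eq0 // => j _; lia.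
rewrite subzn // PrBin_pred1.
have [L [U [hLt [_ /andP[hLH _]]]]] := hzt; have [L' [U' [_ [hUk /andP[_ hHU]]]]] := hzk.
have hZt := is_L_lower_tail hLt hLH; have hZk := is_U_upper_tail hUk hHU.
rewrite thr_expR // in hZt hZk.
have hxi_min : xi p t = Num.min (n%:R * p t) (n%:R - n%:R * p t) by rewrite /xi /mu mulrC.
have hmu : n%:R * p k <= n%:R * p t by rewrite ![n%:R * _]mulrC; exact: ht.
have hLam := ln_ge1 hn4.
set Lam := ln n%:R in hLam hxi hZt hZk *; set xi0 := xi p t in hxi hxi_min *.
have xi0_gt0 : 0 < xi0 by lra.
have hr0 : 0 < Num.sqrt (Lam / xi0) by rewrite sqrtr_gt0 divr_gt0 //; lra.
have hxr : xi0 * Num.sqrt (Lam / xi0) ^+ 2 = Lam.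
  rewrite sqr_sqrtr; first by rewrite mulrC divfK // gt_eqF.
  by rewrite divr_ge0 // ltW //; lra.
have hH_lo := zone_above_mean (hp t) hxi_min hLam hxi hr0 hxr hZt.
have hH_hi := zone_below_mean (hp k) hmu hxi_min hLam hxi hr0 hxr hH_lo hZk.
exact: (binom_pmf_le_upper_tail (hp k) hmu hxi_min hLam hxi hr0 hxr hl hlH hH_lo hH_hi).
Qed.
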